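(* Let $G=(V,E,w_G)$ be a directed graph with non-negative integer edge weights, $n=|V|$, let $s\in V$ be a source node, and let $h$ be an integer with $1\le h\le n$. Consider the following procedure. Step 1: Let $C\subseteq V$ be a set of skeleton nodes containing $s$ and such that, for every pair of nodes $u,v$ for which the shortest path from $u$ to $v$ in $G$ consists of exactly $\lceil h/2\rceil$ nodes, $C$ contains at least one node of one of these shortest paths. Step 2: For each $x\in C$ compute estimates $\tilde d(x,\cdot)$ with $\mathrm{dist}_G(x,v)\le \tilde d(x,v)\le 2\,\mathrm{dist}^h_G(x,v)$ for every $v\in V$. Step 3: Let $H=(C,C^2,w_H)$ be the complete directed graph on $C$ with $w_H(x,y)=\tilde d(x,y)$. Step 4: Compute $\mathrm{dist}_H(s,x)$ for every $x\in C$. Step 5: Let $G'=(V,E\cup(\{s\}\times C),w_{G'})$ where $w_{G'}(u,v)=\mathrm{dist}_H(u,v)$ for $(u,v)\in(\{s\}\times C)\setminus E$, $w_{G'}(u,v)=2w_G(u,v)$ for $(u,v)\in E\setminus(\{s\}\times C)$, and $w_{G'}(u,v)=\min(\mathrm{dist}_H(u,v),2w_G(u,v))$ for $(u,v)\in E\cap(\{s\}\times C)$. Step 6: Return $\hat d(s,v):=\tfrac12\,\mathrm{dist}^h_{G'}(s,v)$ for every $v\in V$. Then for every node $v\in V$, $\tfrac12\,\mathrm{dist}_G(s,v)\le \hat d(s,v)\le \mathrm{dist}_G(s,v)$, and for every edge $(u,v)\in E$, $\hat d(s,v)\le \hat d(s,u)+w_G(u,v)$.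
   Context: For a weighted directed graph, $\mathrm{dist}(u,v)$ denotes the minimum weight of a directed path from $u$ to $v$. For an integer $h\ge1$, the $h$-hop distance $\mathrm{dist}^h(u,v)$ is the minimum weight among all directed paths from $u$ to $v$ with at most $h$ edges. *)

From HB Require Import structures.
From mathcomp Require Import all_boot all_order all_algebra.
From mathcomp Require Export constructive_ereal.
Set Implicit Arguments. Unset Strict Implicit. Unset Printing Implicit Defensive.
Import Order.TTheory GRing.Theory Num.Theory.
Local Open Scope ring_scope.
Local Open Scope ereal_scope.

(* A weighted directed graph on a finite vertex type V is given by an edge
   relation e : rel V and a weight function wt : V -> V -> \bar rat (only
   the values on edges matter).  Distances live in \bar rat, +oo meaning
   "no path". *)

Section Defs.
Variable V : finType.

Fixpoint pweight (wt : V -> V -> \bar rat) (x : V) (p : seq V) : \bar rat :=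
  match p with
  | [::] => 0
  | y :: p' => wt x y + pweight wt y p'
  end.

(* u :: p is a (simple) directed path from u to v; it has size p edges and
   (size p).+1 nodes *)
Definition is_spath (e : rel V) (u : V) (p : seq V) (v : V) : bool :=
  [&& path e u p, uniq (u :: p) & last u p == v].

Definition hdist (e : rel V) (wt : V -> V -> \bar rat) (h : nat) (u v : V)
  : \bar rat :=
  \big[Order.min/+oo]_(k < h.+1)
    \big[Order.min/+oo]_(p : k.-tuple V | is_spath e u p v) pweight wt u p.

(* distance: a simple path has fewer than #|V| edges *)
Definition gdist (e : rel V) (wt : V -> V -> \bar rat) (u v : V) : \bar rat :=
  hdist e wt #|V| u v.

Definition is_shortest (e : rel V) (wt : V -> V -> \bar rat) (u : V)
  (p : seq V) (v : V) : Prop :=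
  is_spath e u p v /\ pweight wt u p = gdist e wt u v.

Definition natw (w : V -> V -> nat) : V -> V -> \bar rat :=
  fun x y => ((w x y)%:R : rat)%:E.

Definition skeleton_ok (e : rel V) (wt : V -> V -> \bar rat) (h : nat)
  (C : {set V}) : Prop :=
  forall u v : V,
    (exists p : seq V, is_shortest e wt u p v /\ (size p).+1 = uphalf h) ->
    exists p : seq V, [/\ is_shortest e wt u p v, (size p).+1 = uphalf h
                        & has (fun x => x \in C) (u :: p)].

Definition H_edge (C : {set V}) : rel V := fun x y => (x \in C) && (y \in C).
Definition distH (C : {set V}) (dt : V -> V -> \bar rat) (x y : V) :=
  gdist (H_edge C) dt x y.

Definition G'_edge (e : rel V) (s : V) (C : {set V}) : rel V :=
  fun x y => e x y || ((x == s) && (y \in C)).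
Definition G'_weight (e : rel V) (w : V -> V -> nat) (s : V) (C : {set V})
  (dt : V -> V -> \bar rat) : V -> V -> \bar rat :=
  fun x y =>
    if (x == s) && (y \in C) then
      (if e x y then Order.min (distH C dt x y) (2%:E * natw w x y)
       else distH C dt x y)
    else 2%:E * natw w x y.

Definition dhat (e : rel V) (w : V -> V -> nat) (s : V) (C : {set V})
  (dt : V -> V -> \bar rat) (h : nat) (v : V) : \bar rat :=
  (2^-1)%:E * hdist (G'_edge e s C) (G'_weight e w s C dt) h s v.

End Defs.

From HB Require Import structures.
From mathcomp Require Import all_boot all_order all_algebra.
From mathcomp Require Import constructive_ereal.
Import Order.TTheory GRing.Theory Num.Theory.
Set Implicit Arguments. Unset Strict Implicit. Unset Printing Implicit Defensive.
Local Open Scope ring_scope.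
Local Open Scope ereal_scope.

(* Skeleton distances overestimate those of G at most twice: a shortest path
   between skeleton nodes meets a skeleton node (on an equally short variant)
   among its last [uphalf h] nodes, so it splits into stretches of at most [h]
   hops, each estimated by [dt].  Hence in G' the source reaches any [v] by one
   skeleton edge followed by fewer than [h] doubled G-edges, within twice
   [dist(s, v)], while no edge of G' is shorter than the G-distance of its
   ends. *)

Lemma ge0_neqNy (R : numDomainType) (x : \bar R) : 0 <= x -> x != -oo.
Proof. by case: x. Qed.

Section Walks.
Variables (V : finType) (e : rel V) (wt : V -> V -> \bar rat).

Local Notation d := (gdist e wt).

Lemma pweight_cat x p1 p2 :
  pweight wt x (p1 ++ p2) = pweight wt x p1 + pweight wt (last x p1) p2.
Proof. by elim: p1 x => [|y p IH] x /=; rewrite ?add0e // IH addeA. Qed.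

Lemma hdist_le_spath h u p v : is_spath e u p v -> (size p <= h)%N ->
  hdist e wt h u v <= pweight wt u p.
Proof.
move=> sp sz; pose k : 'I_h.+1 := Ordinal (sz : (size p < h.+1)%N).
apply: le_trans (bigmin_le _ k _) _.
exact: (bigmin_le_cond _ (j := in_tuple p)).
Qed.

Lemma hdist_attained h u v : hdist e wt h u v = +oo \/
  exists2 p, is_spath e u p v /\ (size p <= h)%N & pweight wt u p = hdist e wt h u v.
Proof.
pose K x := x = +oo \/
  exists2 p, is_spath e u p v /\ (size p <= h)%N & pweight wt u p = x.
have Kmin x y : K x -> K y -> K (Order.min x y) by rewrite minEle; case: ifP.
apply: (big_ind K); [by left | exact: Kmin | move=> k _].
apply: (big_ind K); [by left | exact: Kmin | move=> p sp].
by right; exists (val p); rewrite // size_tuple -ltnS.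
Qed.

Lemma le_hdist h u v B :
  (forall p, is_spath e u p v -> (size p <= h)%N -> B <= pweight wt u p) ->
  B <= hdist e wt h u v.
Proof.
by move=> lb; case: (hdist_attained h u v) => [->|[p [sp sz] <-]];
  [rewrite leey | apply: lb].
Qed.

Section NonnegWeights.
Hypothesis wt_ge0 : forall x y, e x y -> 0 <= wt x y.

Lemma pweight_ge0 x p : path e x p -> 0 <= pweight wt x p.
Proof.
elim: p x => [|y p IH] x //= /andP[exy pp].
by rewrite adde_ge0 ?wt_ge0 ?IH.
Qed.

Lemma hdist_ge0 h u v : 0 <= hdist e wt h u v.
Proof. by apply: le_hdist => p /and3P[pp _ _] _; apply: pweight_ge0. Qed.

Lemma path_shortcut x p : path e x p -> exists q, [/\ path e x q, uniq (x :: q),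
  last x q = last x p, (size q <= size p)%N & pweight wt x q <= pweight wt x p].
Proof.
elim: p x => [|y p IH] x /=; first by exists [::].
case/andP=> exy /IH[q [pq uq lq sq wq]].
have [xq|xNq] := boolP (x \in y :: q); last first.
  by exists (y :: q); rewrite /= exy pq xNq -/(uniq (y :: q)) uq lq ltnS leeD2l.
have pyq : path e x (y :: q) by rewrite /= exy.
have wyq : pweight wt x (y :: q) <= wt x y + pweight wt y p by rewrite /= leeD2l.
have syq : (size (y :: q) <= (size p).+1)%N by [].
rewrite -lq -[last y q]/(last x (y :: q)).
case/splitPr: xq pyq (uq) wyq syq => q1 q2.
rewrite cat_path last_cat cat_uniq pweight_cat /= => /and3P[pq1 ex pq2].
move=> /and4P[_ _ xNq2 uq2] wq12 sq12.
exists q2; rewrite pq2 xNq2 uq2; split=> //.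
  by rewrite (leq_trans _ sq12) // size_cat /= -addSnnS leq_addl.
apply: le_trans wq12; rewrite addeA leeDr //.
by rewrite adde_ge0 ?pweight_ge0 ?wt_ge0.
Qed.

Lemma hdist_le_walk h u p v : path e u p -> last u p = v -> (size p <= h)%N ->
  hdist e wt h u v <= pweight wt u p.
Proof.
case/path_shortcut=> q [pq uq lq sq wq] lp sp; apply: le_trans wq.
by apply: hdist_le_spath; rewrite 1?(leq_trans sq) // /is_spath pq uq lq lp eqxx.
Qed.

Lemma gdist_le_walk u p v : path e u p -> last u p = v -> d u v <= pweight wt u p.
Proof.
case/path_shortcut=> q [pq uq lq sq wq] lp; apply: le_trans wq.
apply: hdist_le_spath; first by rewrite /is_spath pq uq lq lp eqxx.
by apply: ltnW; rewrite -[(size q).+1]/(size (u :: q)) -(card_uniqP uq) max_card.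
Qed.

Lemma hdist_refl_le0 h u : hdist e wt h u u <= 0.
Proof. exact: (@hdist_le_walk h u [::]). Qed.

Lemma gdist_triangle x y z : d x z <= d x y + d y z.
Proof.
rewrite {2 3}/gdist.
case: (hdist_attained #|V| x y) => [->|[p [/and3P[pp _ /eqP lp] _] <-]].
  by rewrite addye ?leey ?ge0_neqNy ?hdist_ge0.
case: (hdist_attained #|V| y z) => [->|[q [/and3P[pq _ /eqP lq] _] <-]].
  by rewrite addey ?leey ?ge0_neqNy ?pweight_ge0.
rewrite -lp -pweight_cat; apply: gdist_le_walk; last by rewrite last_cat lp.
by rewrite cat_path pp lp.
Qed.

Lemma shortest_of_walk x q y : path e x q -> last x q = y ->
  pweight wt x q <= d x y -> exists2 q', is_shortest e wt x q' y & (size q' <= size q)%N.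
Proof.
case/path_shortcut=> q' [pq' uq' lq' sq' wq'] lq wq; exists q' => //.
have sp : is_spath e x q' y by rewrite /is_spath pq' uq' lq' lq eqxx.
split=> //; apply/le_anti; rewrite (le_trans wq') //=.
by case/and3P: sp => pq _ /eqP; apply: gdist_le_walk.
Qed.

Section FiniteWeights.
Hypothesis wt_fin : forall x y, e x y -> wt x y \is a fin_num.

Lemma pweight_fin x p : path e x p -> pweight wt x p \is a fin_num.
Proof.
by elim: p x => [|y p IH] x //= /andP[exy pp]; rewrite fin_numD wt_fin ?IH.
Qed.

Lemma gdist_fin_shortest x p y : is_shortest e wt x p y -> d x y \is a fin_num.
Proof. by case=> /and3P[pp _ _] <-; apply: pweight_fin. Qed.

Lemma spath_split x p1 p2 y : is_spath e x (p1 ++ p2) y ->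
  is_spath e x p1 (last x p1) /\ is_spath e (last x p1) p2 y.
Proof.
rewrite /is_spath cat_path last_cat => /and3P[/andP[pp1 pp2] up ->].
rewrite pp1 pp2 eqxx !andbT; move: (up); rewrite -cat_cons cat_uniq => /andP[-> _].
by move: up; rewrite -cat_cons lastI cat_rcons cat_uniq => /and3P[_ _].
Qed.

Lemma shortest_split x p1 p2 y : is_shortest e wt x (p1 ++ p2) y ->
  is_shortest e wt x p1 (last x p1) /\ is_shortest e wt (last x p1) p2 y.
Proof.
case=> /spath_split[sp1 sp2]; rewrite pweight_cat => wp.
move: (sp1) (sp2) => /and3P[pp1 _ /eqP lp1] /and3P[pp2 _ /eqP lp2].
have d1 := gdist_le_walk pp1 lp1; have d2 := gdist_le_walk pp2 lp2.
have tri := gdist_triangle x (last x p1) y.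
have f1 := pweight_fin pp1; have f2 := pweight_fin pp2.
split; split=> //; apply/le_anti; rewrite ?d1 ?d2 ?andbT.
- by rewrite -(leeD2rE _ _ f2) wp (le_trans tri) // leeD2l.
- by rewrite -(leeD2lE _ _ f1) wp (le_trans tri) // leeD2r.
Qed.

Lemma gdist_split x p1 p2 y : is_shortest e wt x (p1 ++ p2) y ->
  d x y = d x (last x p1) + d (last x p1) y.
Proof.
move=> sp; have [[_ <-] [_ <-]] := shortest_split sp.
by case: sp => _ <-; rewrite pweight_cat.
Qed.

End FiniteWeights.
End NonnegWeights.
End Walks.

Lemma gdist_le_hdist_dominated (V : finType) (e e' : rel V)
    (wt wt' : V -> V -> \bar rat) h u v :
  (forall x y, e x y -> 0 <= wt x y) ->
  (forall x y, e' x y -> gdist e wt x y <= wt' x y) ->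
  gdist e wt u v <= hdist e' wt' h u v.
Proof.
move=> wt_ge0 dom; apply: le_hdist => p /and3P[pp _ /eqP <-] _.
elim: p u pp => [|y p IH] u /=; first by move=> _; apply: hdist_refl_le0.
case/andP=> uy /IH dyp; apply: le_trans (gdist_triangle wt_ge0 u y _) _.
exact: leeD (dom _ _ uy) dyp.
Qed.

Lemma natw_ge0 (V : finType) (w : V -> V -> nat) x y : 0 <= natw w x y.
Proof. by rewrite lee_fin ler0n. Qed.

Lemma pweight_natw_ge0 (V : finType) (w : V -> V -> nat) x p :
  0 <= pweight (natw w) x p.
Proof. by elim: p x => [|y p IH] x //=; rewrite adde_ge0 ?natw_ge0. Qed.

Lemma halfeK (x : \bar rat) : (2^-1)%:E * (2%:E * x) = x.
Proof. by rewrite muleA -EFinM mulVf // mul1e. Qed.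

Lemma lee_mul2 (x y : \bar rat) : x <= y -> 2%:E * x <= 2%:E * y.
Proof. exact: lee_wpmul2l. Qed.

Lemma mul2eD (x y : \bar rat) : 0 <= x -> 0 <= y -> 2%:E * (x + y) = 2%:E * x + 2%:E * y.
Proof. exact: ge0_muleDr. Qed.

Lemma lee_half (x y : \bar rat) : x <= y -> (2^-1)%:E * x <= (2^-1)%:E * y.
Proof. by apply: lee_wpmul2l; rewrite lee_fin invr_ge0. Qed.

Section SkeletonEstimate.
Variables (V : finType) (E : rel V) (w : V -> V -> nat) (s : V) (h : nat)
  (C : {set V}) (dt : V -> V -> \bar rat).

Local Notation W := (natw w).
Local Notation d := (gdist E W).
Local Notation pw := (pweight W).
Local Notation dH := (distH C dt).
Local Notation E' := (G'_edge E s C).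
Local Notation W' := (G'_weight E w s C dt).
Local Notation d' := (hdist E' W' h s).

Let W_ge0 x y (_ : E x y) : 0 <= W x y := natw_ge0 w x y.
Let W_fin x y (_ : E x y) : W x y \is a fin_num := erefl.

Lemma gdist_ge0 x y : 0 <= d x y.
Proof. exact: hdist_ge0 W_ge0 _ _ _. Qed.

Hypothesis dt_ge : forall x v, x \in C -> d x v <= dt x v.

Let dt_ge0 x y : H_edge C x y -> 0 <= dt x y.
Proof. by case/andP=> xC _; rewrite (le_trans (gdist_ge0 x y)) ?dt_ge. Qed.

Lemma distH_ge0 x y : 0 <= dH x y.
Proof. exact: hdist_ge0 dt_ge0 _ _ _. Qed.

Lemma distH_triangle x y z : dH x z <= dH x y + dH y z.
Proof. exact: gdist_triangle dt_ge0 x y z. Qed.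

Lemma distH_le_dt x y : x \in C -> y \in C -> dH x y <= dt x y.
Proof.
move=> xC yC; rewrite -[dt x y]adde0.
by apply: (gdist_le_walk dt_ge0 (p := [:: y])); rewrite //= /H_edge xC yC.
Qed.

Lemma W'_ge0 x y : 0 <= W' x y.
Proof.
have W2_ge0 : 0 <= 2%:E * W x y by rewrite mule_ge0 ?natw_ge0.
by rewrite /G'_weight; case: ifP => _ //; case: ifP => _; rewrite ?le_min distH_ge0.
Qed.

Let W'_ge0_edge x y (_ : E' x y) : 0 <= W' x y := W'_ge0 x y.

Lemma W'_le_2W x y : E x y -> W' x y <= 2%:E * W x y.
Proof. by rewrite /G'_weight => -> ; case: ifP => _ //; rewrite ge_min lexx orbT. Qed.

Lemma W'_le_distH y : y \in C -> W' s y <= dH s y.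
Proof. by rewrite /G'_weight eqxx => -> /=; case: ifP => _ //; rewrite ge_min lexx. Qed.

Lemma W'_source_edge y : E' s y ->
  (y \in C /\ W' s y = dH s y) \/ (E s y /\ W' s y = 2%:E * W s y).
Proof.
rewrite /G'_edge /G'_weight eqxx /=; case: (boolP (y \in C)) => yC /=.
  by case: ifP => Esy _; [rewrite minEle; case: ifP => _; [left|right] | left].
by rewrite orbF; right.
Qed.

Lemma path_E' x p : path E x p -> path E' x p.
Proof. by apply: sub_path => a b Eab; rewrite /G'_edge Eab. Qed.

Lemma pweight_W'_le x p : path E x p -> pweight W' x p <= 2%:E * pw x p.
Proof.
elim: p x => [|y p IH] x /=; first by rewrite mule0.
case/andP=> Exy /IH wp; rewrite mul2eD ?natw_ge0 ?pweight_natw_ge0 //.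
exact: leeD (W'_le_2W Exy) wp.
Qed.

Lemma path_E'_off_source x p : path E' x p -> s \notin x :: p ->
  path E x p /\ pweight W' x p = 2%:E * pw x p.
Proof.
elim: p x => [|y p IH] x /=; first by rewrite mule0.
case/andP=> E'xy /IH{}IH; rewrite in_cons negb_or => /andP[xNs /IH[pp ->]].
have Exy : E x y by move: E'xy; rewrite /G'_edge eq_sym (negbTE xNs) orbF.
rewrite Exy pp mul2eD ?natw_ge0 ?pweight_natw_ge0 //; split=> //.
by rewrite /G'_weight eq_sym (negbTE xNs).
Qed.

Lemma gdist_le_distH x y : d x y <= dH x y.
Proof. by apply: gdist_le_hdist_dominated => // a b /andP[aC _]; apply: dt_ge. Qed.

Lemma gdist_le_W x y : E x y -> d x y <= W x y.
Proof.
by move=> Exy; rewrite -[W x y]adde0 (gdist_le_walk W_ge0 (p := [:: y])) /= ?Exy.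
Qed.

Lemma gdist_le_2W x y : E x y -> d x y <= 2%:E * W x y.
Proof.
by move/gdist_le_W/le_trans; apply; rewrite -EFinM lee_fin ler_peMl.
Qed.

Lemma gdist_le_W' x y : E' x y -> d x y <= W' x y.
Proof.
rewrite /G'_edge /G'_weight /=; case: ifP => [/andP[/eqP -> _] _ | _].
  by case: ifP => Esy; rewrite ?le_min gdist_le_distH ?gdist_le_2W.
by rewrite orbF => /gdist_le_2W.
Qed.

Lemma gdist_le_hdistG' v : d s v <= d' v.
Proof. exact: gdist_le_hdist_dominated gdist_le_W'. Qed.

Lemma dhat_ge_half_gdist v : (2^-1)%:E * d s v <= dhat E w s C dt h v.
Proof. exact/lee_half/gdist_le_hdistG'. Qed.

Section Skeleton.
Hypotheses (h_gt0 : (0 < h)%N) (skel : skeleton_ok E W h C).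

Let T_gt0 : (0 < uphalf h)%N. Proof. by rewrite uphalf_gt0. Qed.
Let T_le_h : (uphalf h <= h)%N. Proof. by rewrite leq_uphalf_double -addnn leq_addr. Qed.

(* The last [uphalf h] nodes of a long shortest path are themselves a shortest
   path with [uphalf h] nodes, so [skel] yields a node of [C] on some shortest
   path between the same endpoints. *)
Lemma skeleton_near_end x p v : is_shortest E W x p v -> ((uphalf h).-1 <= size p)%N ->
  exists c r, [/\ c \in C, is_shortest E W c r v, (size r < uphalf h)%N,
    d x c + d c v = d x v & exists2 q, is_shortest E W x q c & (size q <= size p)%N].
Proof.
move=> sp szp; rewrite -(cat_take_drop (size p - (uphalf h).-1) p) in sp.
set q1 := take _ p in sp; set q2 := drop _ p in sp.
have sz2 : size q2 = (uphalf h).-1 by rewrite size_drop subKn.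
have [sp1 sp2] := shortest_split W_ge0 W_fin sp.
have dxv := gdist_split W_ge0 W_fin sp; set u := last x q1 in sp1 sp2 dxv.
have [|R [spR szR /hasP[c cR cC]]] := @skel u v.
  by exists q2; rewrite sz2 (prednK T_gt0).
case/splitPl: cR spR szR => r1 r2 lr1 spR szR.
have [spr1 spr2] := shortest_split W_ge0 W_fin spR; rewrite lr1 in spr1 spr2.
have duv := gdist_split W_ge0 W_fin spR; rewrite lr1 in duv.
have [[/and3P[pq1 _ /eqP lq1] wq1] [/and3P[pr1 _ _] wr1]] := (sp1, spr1).
have wq : path E x (q1 ++ r1) /\ last x (q1 ++ r1) = c.
  by rewrite cat_path last_cat lq1 pq1 pr1 lr1.
have dxc : d x c = d x u + d u c.
  apply/le_anti; apply/andP; split.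
    by rewrite -wq1 -wr1 -lq1 -pweight_cat; apply: gdist_le_walk wq.1 wq.2.
  rewrite -(leeD2rE _ _ (gdist_fin_shortest W_fin spr2)) -addeA -duv -dxv.
  exact: gdist_triangle.
exists c, r2; split=> //.
- by rewrite -szR size_cat ltnS leq_addl.
- by rewrite dxc -addeA -duv.
have [|q spq szq] := shortest_of_walk W_ge0 wq.1 wq.2.
  by rewrite pweight_cat lq1 wq1 wr1 dxc.
exists q => //; rewrite (leq_trans szq) // -(cat_take_drop (size p - (uphalf h).-1) p).
by rewrite !size_cat leq_add2l sz2 -szR size_cat leq_addr.
Qed.

Hypothesis dt_le : forall x v, x \in C -> dt x v <= 2%:E * hdist E W h x v.

Lemma distH_le_2gdist_short x c p : x \in C -> c \in C -> is_shortest E W x p c ->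
  (size p <= h)%N -> dH x c <= 2%:E * d x c.
Proof.
move=> xC cC [sp <-] sz; apply: le_trans (distH_le_dt xC cC) _.
by apply: le_trans (dt_le c xC) _; apply/lee_mul2/hdist_le_spath.
Qed.

(* Induction on the number of edges, through the skeleton node [c'] that
   [skeleton_near_end] finds at most [h] hops before [c]. *)
Lemma distH_le_2gdist_shortest m x c p : x \in C -> c \in C ->
  is_shortest E W x p c -> (size p <= m)%N -> dH x c <= 2%:E * d x c.
Proof.
elim: m x c p => [|m IH] x c p xC cC sp sz; have [hp|hp] := leqP (size p) h;
  try exact: distH_le_2gdist_short sp hp; first by have := leq_trans hp sz.
case/lastP: p sp sz hp => [|p z] sp; rewrite ?size_rcons //= ltnS => sz hp.
have /eqP lz : last x (rcons p z) == c by case: sp => /and3P[].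
rewrite last_rcons in lz; subst z; rewrite -cats1 in sp.
have [sp1 [/and3P[/= /andP[Eyc _] _ _] wc]] := shortest_split W_ge0 W_fin sp.
have dxc := gdist_split W_ge0 W_fin sp; set y := last x p in sp1 Eyc wc dxc.
have [|c' [r [c'C [/and3P[pr _ /eqP lr] wr] szr dxy [q spq szq]]]] :=
  skeleton_near_end sp1.
  exact: leq_trans (leq_pred _) (leq_trans T_le_h hp).
have hc'c : hdist E W h c' c <= d c' y + d y c.
  rewrite -wr -wc -[W y c + 0]/(pw y [:: c]) -lr -pweight_cat.
  apply: (hdist_le_walk W_ge0); rewrite ?cat_path ?last_cat ?lr /= ?pr ?Eyc //.
  by rewrite size_cat addn1 (leq_trans szr T_le_h).
apply: le_trans (distH_triangle x c' c) _.
rewrite dxc -dxy -addeA mul2eD ?adde_ge0 ?gdist_ge0 //.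
apply: leeD (IH x c' q xC c'C spq (leq_trans szq sz)) _.
exact: le_trans (distH_le_dt c'C cC) (le_trans (dt_le c c'C) (lee_mul2 hc'c)).
Qed.

Lemma distH_le_2gdist x c : x \in C -> c \in C -> dH x c <= 2%:E * d x c.
Proof.
move=> xC cC; case: (hdist_attained E W #|V| x c) => [dxc|[p [sp _] wp]].
  by rewrite /gdist dxc gt0_muley ?leey.
exact: (@distH_le_2gdist_shortest (size p) x c p xC cC (conj sp wp)).
Qed.

(* A shortest [x]-[v] path with at least [h] edges is replaced by the skeleton
   edge [s c] followed by the last fewer than [uphalf h] edges of the path. *)
Lemma hdistG'_le_distH_add x v : x \in C -> d' v <= dH s x + 2%:E * d x v.
Proof.
move=> xC; case: (hdist_attained E W #|V| x v) => [dxv|[p [sp _] wp]].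
  by rewrite /gdist dxv gt0_muley // addey ?leey ?ge0_neqNy ?distH_ge0.
have [c [r [cC [/and3P[pr _ /eqP lr] wr] szr dc]]] : exists c r, [/\ c \in C,
    is_shortest E W c r v, (size r < h)%N &
    dH s c + 2%:E * d c v <= dH s x + 2%:E * d x v].
  have [hp|hp] := ltnP (size p) h; first by exists x, p.
  have [|c [r [cC spr szr dxc _]]] := skeleton_near_end (conj sp wp).
    exact: leq_trans (leq_pred _) (leq_trans T_le_h hp).
  exists c, r; split=> //; first exact: leq_trans szr T_le_h.
  rewrite -dxc mul2eD ?gdist_ge0 // addeA leeD2r // (le_trans (distH_triangle s x c)) //.
  by rewrite leeD2l // distH_le_2gdist.
have walk : path E' s (c :: r) by rewrite /= {1}/G'_edge eqxx cC orbT path_E'.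
apply: le_trans (hdist_le_walk W'_ge0_edge walk lr szr) (le_trans _ dc) => /=.
by rewrite -wr leeD ?W'_le_distH ?pweight_W'_le.
Qed.

Hypothesis sC : s \in C.

Lemma hdistG'_le_2gdist v : d' v <= 2%:E * d s v.
Proof.
apply: le_trans (hdistG'_le_distH_add v sC) _.
by rewrite -[X in _ <= X]add0e leeD2r // hdist_refl_le0.
Qed.

Lemma hdistG'_le_source_edge y v : E' s y -> d' v <= W' s y + 2%:E * d y v.
Proof.
case/W'_source_edge => [[yC ->]|[Esy ->]]; first exact: hdistG'_le_distH_add.
rewrite -mul2eD ?natw_ge0 ?gdist_ge0 //; apply: le_trans (hdistG'_le_2gdist v) _.
apply/lee_mul2/(le_trans (gdist_triangle W_ge0 s y v)).
by rewrite leeD2r // gdist_le_W.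
Qed.

(* The optimal [h]-hop path to [u] in [G'] leaves [s] once and then only
   uses doubled edges of [G], so the bound through its first edge applies. *)
Lemma hdistG'_edge u v : E u v -> d' v <= d' u + 2%:E * W u v.
Proof.
move=> Euv; case: (hdist_attained E' W' h s u) => [->|[[|y p] [sp szp] <-]].
- by rewrite addye ?leey ?ge0_neqNy ?mule_ge0 ?natw_ge0.
- have /eqP/= su : last s [::] == u by case/and3P: sp.
  subst u; have walk : path E' s [:: v] by rewrite /= {1}/G'_edge Euv.
  apply: le_trans (hdist_le_walk W'_ge0_edge walk erefl h_gt0) _.
  by rewrite /= adde0 add0e W'_le_2W.
case/and3P: sp => /= /andP[E'sy pp] /andP[sNp _] /eqP lp; subst u.
have [pE ->] := path_E'_off_source pp sNp.
rewrite -addeA -mul2eD ?pweight_natw_ge0 ?natw_ge0 //.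
apply: le_trans (hdistG'_le_source_edge v E'sy) _; rewrite leeD2l //; apply: lee_mul2.
rewrite -[W _ v]adde0 -[W _ v + 0]/(pw (last y p) [:: v]) -pweight_cat.
by apply: (gdist_le_walk W_ge0); rewrite ?cat_path ?last_cat /= ?pE ?Euv.
Qed.

Lemma dhat_le_gdist v : dhat E w s C dt h v <= d s v.
Proof. by rewrite -[d s v]halfeK; apply/lee_half/hdistG'_le_2gdist. Qed.

Lemma dhat_le_add u v : E u v -> dhat E w s C dt h v <= dhat E w s C dt h u + W u v.
Proof.
move=> Euv; rewrite /dhat -[W u v]halfeK.
rewrite -ge0_muleDr ?(hdist_ge0 W'_ge0_edge) ?mule_ge0 ?natw_ge0 //.
exact/lee_half/hdistG'_edge.
Qed.

End Skeleton.
End SkeletonEstimate.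

Theorem mainTheorem3 (V : finType) (E : rel V) (w : V -> V -> nat) (s : V)
  (h : nat) (C : {set V}) (dt : V -> V -> \bar rat) :
  (1 <= h <= #|V|)%N ->
  s \in C ->
  skeleton_ok E (natw w) h C ->
  (forall x v, x \in C ->
     gdist E (natw w) x v <= dt x v /\
     dt x v <= 2%:E * hdist E (natw w) h x v) ->
  (forall v, (2^-1)%:E * gdist E (natw w) s v <= dhat E w s C dt h v /\
             dhat E w s C dt h v <= gdist E (natw w) s v) /\
  (forall u v, E u v -> dhat E w s C dt h v <= dhat E w s C dt h u + natw w u v).
Proof.
move=> /andP[h_gt0 _] sC skel dt_bounds.
have dt_ge x v xC := (dt_bounds x v xC).1.
have dt_le x v xC := (dt_bounds x v xC).2.
split=> [v|u v Euv]; first split.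
- exact: dhat_ge_half_gdist.
- exact: dhat_le_gdist.
- exact: dhat_le_add.
Qed.
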